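(* For any boolean $v\in\mathfrak{S}_n$, we have $n-\lambda_1(v)\le\textsf{run}(v)$. In particular, $\lambda_2(v)\le\textsf{run}(v)$.
   Context: $\sigma_i=(i,i+1)$; reduced words are sequences of subscripts of reduced expressions. A permutation is boolean if its reduced words have no repeated letters. A run is a sequence of consecutive integers that is increasing or decreasing (single letters allowed); $\textsf{run}(v)$ is the fewest number of runs whose concatenation is a reduced word for $v$. $\lambda_i(v)$ is the length of the $i$-th row of the Robinson–Schensted shape of $v$ (zero if absent). *)

From mathcomp Require Import all_boot all_fingroup.
Set Implicit Arguments. Unset Strict Implicit. Unset Printing Implicit Defensive.

(* Permutations of [n] = {1,...,n} are modelled as v : 'S_n, where the
   position k in [n] corresponds to the ordinal k-1 : 'I_n. *)

(* The simple transposition sigma_i = (i, i+1) acting on 0-indexed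
   positions: it swaps i-1 and i. *)
Definition sfun (i : nat) (x : nat) : nat :=
  if x == i.-1 then i else if x == i then i.-1 else x.

Definition word_fun (w : seq nat) : nat -> nat :=
  foldr (fun a f => sfun a \o f) id w.

Definition represents (n : nat) (w : seq nat) (v : 'S_n) : Prop :=
  all (fun a => (0 < a) && (a < n)) w /\
  forall x : 'I_n, word_fun w (val x) = val (v x).

Definition reduced_word (n : nat) (w : seq nat) (v : 'S_n) : Prop :=
  represents w v /\ forall w', represents w' v -> size w <= size w'.

Definition is_boolean (n : nat) (v : 'S_n) : Prop :=
  forall w, reduced_word w v -> uniq w.

Definition is_run (s : seq nat) : Prop :=
  exists a k, 0 < k /\ (s = iota a k \/ s = rev (iota a k)).

Definition is_run_number (n : nat) (v : 'S_n) (k : nat) : Prop :=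
  (exists rs : seq (seq nat),
      (forall r, r \in rs -> is_run r) /\ reduced_word (flatten rs) v /\
      size rs = k) /\
  (forall rs : seq (seq nat),
      (forall r, r \in rs -> is_run r) -> reduced_word (flatten rs) v ->
      k <= size rs).

Fixpoint rowins (x : nat) (r : seq nat) : option nat * seq nat :=
  match r with
  | [::] => (None, [:: x])
  | y :: r' => if x < y then (Some y, x :: r')
               else let: (b, r'') := rowins x r' in (b, y :: r'')
  end.

Fixpoint tabins (x : nat) (t : seq (seq nat)) : seq (seq nat) :=
  match t with
  | [::] => [:: [:: x]]
  | r :: t' => let: (b, r') := rowins x r in
               match b with
               | None => r' :: t'
               | Some y => r' :: tabins y t'
               end
  end.

Definition RS_P (w : seq nat) : seq (seq nat) := foldl (fun t x => tabins x t) [::] w.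

Definition RS_shape (n : nat) (v : 'S_n) : seq nat :=
  map size (RS_P [seq val (v j) | j <- enum 'I_n]).

(* lambda_i(v), 1-indexed rows; zero if the row is absent. *)
Definition lambda (n : nat) (v : 'S_n) (i : nat) : nat := nth 0 (RS_shape v) i.-1.

(* A run [i, i+1, ..., j] (or its reverse) acts as a cyclic shift of the block
   [{i-1, ..., j}], which is increasing off a single point.  A product of [k]
   runs is therefore increasing on all but at most [k] points of [[n]], so the
   one-line notation of [v] has an increasing subsequence of length at least
   [n - k].  By Schensted, the first row of the RS tableau is at least as long
   as any increasing subsequence, and [lambda_1 + lambda_2 <= n] gives the
   second bound. *)

From mathcomp Require Import all_boot all_fingroup zify.
Set Implicit Arguments. Unset Strict Implicit. Unset Printing Implicit Defensive.

Lemma mem_rowins x r z : z \in (rowins x r).2 -> (z == x) || (z \in r).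
Proof.
elim: r => [|y r IH] /=; first by rewrite !inE orbF.
case: ifP => _ /=.
  by rewrite !inE; case/orP=> ->; rewrite ?orbT.
case: (rowins x r) IH => b r' /= IH.
rewrite !inE; case/orP => [->|/IH]; first by rewrite orbT.
by case/orP=> ->; rewrite ?orbT.
Qed.

Lemma sorted_rowins x r : sorted leq r -> sorted leq (rowins x r).2.
Proof.
elim: r => [|y r IH] //= r_sorted.
have /andP[ge_y sorted_r] : all (leq y) r && sorted leq r.
  by rewrite -(path_sortedE leq_trans).
case: ifP => lt_xy /=.
  rewrite (path_sortedE leq_trans) sorted_r andbT.
  by apply/allP=> z /(allP ge_y); lia.
have := IH sorted_r; have := @mem_rowins x r.
case: (rowins x r) => b r' /= mem_r' sorted_r'.
rewrite (path_sortedE leq_trans) sorted_r' andbT.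
by apply/allP=> z /mem_r' /orP[/eqP->|/(allP ge_y)]; first lia.
Qed.

Lemma size_rowins x r : size (rowins x r).2 = size r + ((rowins x r).1 == None).
Proof.
elim: r => [|y r IH] //=.
case: ifP => _ /=; first by rewrite addn0.
by case: (rowins x r) IH => b r' /= ->.
Qed.

Lemma nth_rowins_le x r i : i < size r -> nth 0 (rowins x r).2 i <= nth 0 r i.
Proof.
elim: r i => [|y r IH] // i /=.
case: ifP => lt_xy; first by case: i => [|i] /=; lia.
by case: (rowins x r) (IH i.-1) => b r' /=; case: i => [|i] /=.
Qed.

Lemma rowins_settles x r j : j <= size r -> (forall i, i < j -> nth 0 r i <= x) ->
  j < size (rowins x r).2 /\ nth 0 (rowins x r).2 j <= x.
Proof.
elim: r j => [|y r IH] [|j] //= le_j le_x.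
  by case: ifP => // /negbT; case: (rowins x r) => b r' /=; lia.
have le_yx : y <= x := le_x 0 erefl; rewrite [x < y]ltnNge le_yx /=.
by case: (rowins x r) (IH j le_j (fun i => le_x i.+1)) => b r'.
Qed.

Definition first_row (s : seq nat) : seq nat := foldl (fun r x => (rowins x r).2) [::] s.

Lemma first_row_rcons s x : first_row (rcons s x) = (rowins x (first_row s)).2.
Proof. by rewrite /first_row foldl_rcons. Qed.

Lemma sorted_first_row s : sorted leq (first_row s).
Proof. by elim/last_ind: s => [|s x IH] //; rewrite first_row_rcons sorted_rowins. Qed.

Lemma head_RS_P s : head [::] (RS_P s) = first_row s.
Proof.
have head_tabins x t : head [::] (tabins x t) = (rowins x (head [::] t)).2.
  by case: t => [|r t] //=; case: (rowins x r) => [[y|] r'].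
suff head_foldl t : head [::] (foldl (fun t x => tabins x t) t s) =
    foldl (fun r x => (rowins x r).2) (head [::] t) s by exact: head_foldl.
by elim: s t => [|x s IH] t //=; rewrite IH head_tabins.
Qed.

Lemma subseq_rcons_rcons (u s : seq nat) x y : subseq (rcons u y) (rcons s x) ->
  subseq (rcons u y) s \/ y = x /\ subseq u s.
Proof.
rewrite -subseq_rev !rev_rcons /=.
by case: eqP => [->|_]; rewrite -?rev_rcons subseq_rev; auto.
Qed.

(* Schensted: the entry at position [m] of the first row is at most the
   smallest possible last letter of an increasing subsequence of length [m+1]. *)
Lemma first_row_bound s u y : subseq (rcons u y) s -> sorted ltn (rcons u y) ->
  size u < size (first_row s) /\ nth 0 (first_row s) (size u) <= y.
Proof.
elim/last_ind: s u y => [|s x IH] u y; first by case: u.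
rewrite first_row_rcons.
case/subseq_rcons_rcons => [sub_uy|[-> sub_u]] sorted_uy.
  have [lt_u le_y] := IH u y sub_uy sorted_uy.
  rewrite size_rowins; split; first exact: leq_trans lt_u (leq_addr _ _).
  exact: leq_trans (nth_rowins_le x lt_u) le_y.
case/lastP: u sub_u sorted_uy => [|u z] sub_uz sorted_uzx.
  exact: rowins_settles.
have /cat_sorted2[sorted_uz _] : sorted ltn (rcons u z ++ [:: x]) by rewrite cats1.
have /cat_sorted2[_ /andP[lt_zx _]] : sorted ltn (u ++ [:: z; x]).
  by rewrite -cat_rcons cats1.
have [lt_u le_z] := IH u z sub_uz sorted_uz.
apply: rowins_settles => [|i]; rewrite size_rcons // => le_i.
have le_nth := sorted_leq_nth leq_trans leqnn 0 (sorted_first_row s).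
by apply: leq_trans (le_nth i (size u) _ _ _) _; rewrite ?inE //; lia.
Qed.

Lemma size_increasing_subseq_le_first_row s t :
  subseq t s -> sorted ltn t -> size t <= size (first_row s).
Proof.
case/lastP: t => [|u y] // sub_uy sorted_uy.
by rewrite size_rcons; have [] := first_row_bound sub_uy sorted_uy.
Qed.

Lemma sumn_shape_RS_P s : sumn (map size (RS_P s)) = size s.
Proof.
have size_tabins x t : sumn (map size (tabins x t)) = (sumn (map size t)).+1.
  elim: t x => [|r t IH] x //=.
  have := size_rowins x r.
  by case: (rowins x r) => [[y|] r'] /= ->; rewrite ?IH /=; lia.
suff sumn_foldl t : sumn (map size (foldl (fun t x => tabins x t) t s)) =
    sumn (map size t) + size s by exact: sumn_foldl.
by elim: s t => [|x s IH] t /=; rewrite ?addn0 // IH size_tabins addSnnS.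
Qed.

Definition one_line n (v : 'S_n) : seq nat := [seq val (v j) | j <- enum 'I_n].

Lemma size_one_line n (v : 'S_n) : size (one_line v) = n.
Proof. by rewrite size_map size_enum_ord. Qed.

Lemma lambda1_lambda2_le n (v : 'S_n) : lambda v 1 + lambda v 2 <= n.
Proof.
rewrite -[leqRHS](size_one_line v) -sumn_shape_RS_P /lambda /RS_shape.
by case: (RS_P _) => [|r [|r' t]] //=; lia.
Qed.

Lemma size_increasing_subseq_le_lambda1 n (v : 'S_n) t :
  subseq t (one_line v) -> sorted ltn t -> size t <= lambda v 1.
Proof.
move=> sub_t sorted_t; rewrite /lambda /RS_shape -/(one_line v).
by move: (size_increasing_subseq_le_first_row sub_t sorted_t); rewrite -head_RS_P; case: RS_P.
Qed.

Lemma word_fun_cat w1 w2 x : word_fun (w1 ++ w2) x = word_fun w1 (word_fun w2 x).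
Proof. by elim: w1 => [|a w1 IH] //=; rewrite IH. Qed.

Definition cycle_up b m x :=
  if (b <= x) && (x < b + m) then x.+1 else if x == b + m then b else x.

Definition cycle_down b m x :=
  if (b < x) && (x <= b + m) then x.-1 else if x == b then b + m else x.

Lemma word_fun_iota b m x : word_fun (iota b.+1 m) x = cycle_up b m x.
Proof.
elim: m b => [|m IH] b; rewrite /cycle_up /= ?IH /sfun /cycle_up /=;
  by do ! case: ifP; lia.
Qed.

Lemma word_fun_rev_iota b m x : word_fun (rev (iota b.+1 m)) x = cycle_down b m x.
Proof.
elim: m b x => [|m IH] b x; rewrite /cycle_down /=; first by do ! case: ifP; lia.
rewrite rev_cons -cats1 word_fun_cat IH /= /sfun /cycle_down /=; do ! case: ifP; lia.
Qed.

Lemma cycle_up_increasing b m : {in predC1 (b + m) &, {homo cycle_up b m : x y / x < y}}.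
Proof. move=> x y; rewrite !inE /cycle_up => ne_x ne_y lt_xy; do ! case: ifP; lia. Qed.

Lemma cycle_down_increasing b m : {in predC1 b &, {homo cycle_down b m : x y / x < y}}.
Proof. move=> x y; rewrite !inE /cycle_down => ne_x ne_y lt_xy; do ! case: ifP; lia. Qed.

(* [is_run] allows the letter [0]; since [0.-1 = 0], [sfun 0] is the identity. *)
Lemma sfun0 x : sfun 0 x = x.
Proof. by rewrite /sfun; case: eqP. Qed.

Lemma run_increasing r : is_run r ->
  exists c, {in predC1 c &, {homo word_fun r : x y / x < y}}.
Proof.
case=> [[|b] [[|k] [// _ [->|->]]]].
- exists k => x y ne_x ne_y lt_xy /=; rewrite !sfun0 !word_fun_iota.
  exact: cycle_up_increasing.
- exists 0 => x y ne_x ne_y lt_xy; rewrite rev_cons -cats1 !word_fun_cat /= !sfun0.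
  by rewrite !word_fun_rev_iota; apply: cycle_down_increasing.
- exists (b + k.+1) => x y ne_x ne_y lt_xy; rewrite !word_fun_iota.
  exact: cycle_up_increasing.
- exists b => x y ne_x ne_y lt_xy; rewrite !word_fun_rev_iota.
  exact: cycle_down_increasing.
Qed.

Lemma increasing_subseq_of_runs rs s : (forall r, r \in rs -> is_run r) ->
  sorted ltn s -> exists2 t, subseq t s &
    size s <= size t + size rs /\ sorted ltn (map (word_fun (flatten rs)) t).
Proof.
elim: rs => [|r rs IH] runs_rs sorted_s.
  by exists s; rewrite // addn0 map_id.
have runs_rs' r' : r' \in rs -> is_run r'.
  by move=> r'_in; apply: runs_rs; rewrite inE r'_in orbT.
have [t sub_t [size_t sorted_gt]] := IH runs_rs' sorted_s.
have [c f_incr] := run_increasing (runs_rs r (mem_head r rs)).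
set g := word_fun (flatten rs) in sorted_gt.
exists [seq x <- t | g x != c]; first exact: subseq_trans (filter_subseq _ _) sub_t.
split.
  have hit_c_once : count (fun x => g x == c) t <= 1.
    rewrite -(count_map g (pred1 c)) count_uniq_mem; first by case: (_ \in _).
    exact: sorted_uniq ltn_trans ltnn _ sorted_gt.
  have le_t : size t <= count (fun x => g x != c) t + 1.
    by rewrite -(count_predC (fun x => g x == c)) addnC leq_add2l.
  by rewrite size_filter /= (leq_trans size_t) // addnS -addSn leq_add2r -addn1.
have -> : map (word_fun (flatten (r :: rs))) [seq x <- t | g x != c] =
    map (word_fun r) [seq y <- map g t | y != c].
  by rewrite filter_map -map_comp; apply: eq_map => x; rewrite /= word_fun_cat.
have sorted_gt_c := sorted_filter ltn_trans (predC1 c) sorted_gt.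
exact: homo_sorted_in f_incr (filter_all _ _) sorted_gt_c.
Qed.

Lemma one_line_word_fun n (v : 'S_n) w :
  represents w v -> one_line v = map (word_fun w) (iota 0 n).
Proof.
case=> _ rep_v; rewrite /one_line -val_enum_ord -map_comp.
by apply: eq_map => j; rewrite /= rep_v.
Qed.

Theorem corollary6p3 (n : nat) (v : 'S_n) (k : nat) :
  is_boolean v -> is_run_number v k ->
  n - lambda v 1 <= k /\ lambda v 2 <= k.
Proof.
move=> _ [[rs [runs_rs [[rep_v _] <-]]] _].
have [t sub_t [size_t sorted_vt]] :=
  increasing_subseq_of_runs runs_rs (iota_ltn_sorted 0 n).
have le_lambda1 : size t <= lambda v 1.
  rewrite -(size_map (word_fun (flatten rs))).
  apply: size_increasing_subseq_le_lambda1 sorted_vt.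
  by rewrite (one_line_word_fun rep_v) map_subseq.
have le_n : n <= lambda v 1 + size rs.
  by rewrite -{1}(size_iota 0 n) (leq_trans size_t) // leq_add2r.
by have := lambda1_lambda2_le v; lia.
Qed.
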